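(* Let $n \in \mathbb{N}$ and let $p = (p_1,\ldots,p_n) \in \Delta_n$. Then \[ \frac{n \sum_{i=1}^n p_i^2 - 1}{2\,(n\|p\|_\infty + 1)} \;\le\; \sum_{i=1}^n p_i \log(p_i) + \log(n) \;\le\; n \sum_{i=1}^n p_i^2 - 1 . \] In particular, whenever $p \neq \frac{1}{n}1_n$ (so that $n\sum_i p_i^2 - 1 > 0$), \[ \frac{1}{2(n \|p\|_\infty + 1)} \le \frac{\sum_{i = 1}^{n} p_i \log(p_i) + \log(n)}{n \sum_{i = 1}^{n} p_i^2 - 1} \le 1. \]
   Context: $\Delta_n := \{a \in \mathbb{R}_+^n : \sum_{i=1}^n a_i = 1\}$ is the probability simplex, $\|p\|_\infty = \max_i |p_i|$, $1_n$ is the all-ones vector in $\mathbb{R}^n$, and the convention $0 \log 0 = 0$ is used. *)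

From HB Require Import structures.
From mathcomp Require Import all_boot all_order all_algebra.
From mathcomp Require Import all_classical all_reals all_analysis.
Set Implicit Arguments. Unset Strict Implicit. Unset Printing Implicit Defensive.
Import Order.TTheory GRing.Theory Num.Theory.
Local Open Scope ring_scope.

Definition in_simplex (R : realType) (n : nat) (p : 'I_n -> R) : Prop :=
  (forall i, 0 <= p i) /\ \sum_(i < n) p i = 1.

Definition xlogx (R : realType) (x : R) : R := if x == 0 then 0 else x * ln x.

Definition supnorm (R : realType) (n : nat) (p : 'I_n -> R) : R :=
  \big[Num.max/0]_(i < n) `|p i|.

Definition uniform (R : realType) (n : nat) : 'I_n -> R := fun _ => n%:R^-1.

From HB Require Import structures.
From mathcomp Require Import all_boot all_order all_algebra.
From mathcomp Require Import all_classical all_reals all_analysis.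
From mathcomp Require Import ring lra.
Import Order.TTheory GRing.Theory Num.Theory.
Local Open Scope ring_scope.

(* Write x_i = n p_i and phi(x) = x ln x - x + 1 (the Bregman divergence of
   x ln x between x and 1).  Since sum_i p_i = 1, the entropy gap is
   S = n^-1 sum_i phi(x_i) and Q = n^-1 sum_i (x_i - 1)^2, so both bounds are
   termwise.  The upper one is phi(x) <= (x - 1)^2, from ln x <= x - 1.  For the
   lower one, ln x <= x - 1 at 1/sqrt x gives phi(x) >= (sqrt x - 1)^2, and
   (x - 1)^2 = (sqrt x + 1)^2 (sqrt x - 1)^2 <= 2 (x + 1) (sqrt x - 1)^2 with
   x + 1 <= n ||p||_oo + 1.  Finally Q = 0 forces every x_i = 1, i.e. p uniform. *)

Section BregmanXlogx.
Context {R : realType}.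
Implicit Types a x : R.

Lemma ln_le_subr1 x : 0 < x -> ln x <= x - 1.
Proof.
by move=> x0; have := @le_ln1Dx R (x - 1); rewrite addrCA subrr addr0; apply; lra.
Qed.

Lemma xlogxM a x : 0 < a -> 0 <= x -> xlogx (a * x) = a * xlogx x + a * x * ln a.
Proof.
move=> a0; rewrite le_eqVlt => /predU1P[<-|x0].
  by rewrite /xlogx !(mulr0, mul0r, eqxx, addr0).
rewrite /xlogx !gt_eqF ?mulr_gt0 // lnM ?posrE //; ring.
Qed.

Definition bregman_xlogx x := xlogx x - x + 1.

Lemma bregman_xlogx_le_sqr x : 0 <= x -> bregman_xlogx x <= (x - 1) ^+ 2.
Proof.
rewrite /bregman_xlogx /xlogx le_eqVlt => /predU1P[<-|x0]; first by rewrite eqxx; lra.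
rewrite gt_eqF //; have := ler_wpM2l (ltW x0) (ln_le_subr1 _ x0); lra.
Qed.

Lemma sqr_sqrt_sub1_le_bregman_xlogx x : 0 <= x -> (Num.sqrt x - 1) ^+ 2 <= bregman_xlogx x.
Proof.
rewrite /bregman_xlogx /xlogx le_eqVlt => /predU1P[<-|x0].
  by rewrite eqxx sqrtr0; lra.
have [s s0 ->] : exists2 s : R, 0 < s & x = s ^+ 2.
  by exists (Num.sqrt x); rewrite ?sqrtr_gt0 ?sqr_sqrtr ?ltW.
rewrite sqrtr_sqr gtr0_norm // gt_eqF ?exprn_gt0 // lnXn // -mulr_natl.
have s_lns : s - 1 <= s * ln s.
  have := @ln_le_subr1 s^-1; rewrite invr_gt0 lnV ?posrE // => /(_ s0).
  move=> /(ler_wpM2l (ltW s0)); rewrite mulrBr mulfV ?gt_eqF //; lra.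
have := ler_wpM2l (ltW s0) s_lns; nra.
Qed.

Lemma bregman_xlogx_ge0 x : 0 <= x -> 0 <= bregman_xlogx x.
Proof. by move=> /sqr_sqrt_sub1_le_bregman_xlogx; apply: le_trans; apply: sqr_ge0. Qed.

Lemma sqr_le_bregman_xlogx x : 0 <= x -> (x - 1) ^+ 2 <= 2 * (x + 1) * bregman_xlogx x.
Proof.
move=> x0; set s := Num.sqrt x.
have xE : x = s ^+ 2 by rewrite sqr_sqrtr.
have -> : (x - 1) ^+ 2 = (s + 1) ^+ 2 * (s - 1) ^+ 2 by rewrite xE; ring.
apply: ler_pM; rewrite ?sqr_ge0 ?sqr_sqrt_sub1_le_bregman_xlogx //.
rewrite xE -subr_ge0 (_ : _ - _ = (s - 1) ^+ 2) ?sqr_ge0 //; ring.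
Qed.

Lemma sum_bregman_xlogx_bounds (I : finType) (x : I -> R) m :
  (forall i, 0 <= x i <= m) ->
  (\sum_i (x i - 1) ^+ 2) / (2 * (m + 1)) <= \sum_i bregman_xlogx (x i)
  <= \sum_i (x i - 1) ^+ 2.
Proof.
move=> xm; apply/andP; split; last first.
  by apply: ler_sum => i _; apply: bregman_xlogx_le_sqr; case/andP: (xm i).
rewrite mulr_suml; apply: ler_sum => i _; have /andP[xi0 xim] := xm i.
have m1 : 0 < 2 * (m + 1) by lra.
rewrite ler_pdivrMr // mulrC; apply: (le_trans (sqr_le_bregman_xlogx _ xi0)).
by rewrite ler_wpM2r ?bregman_xlogx_ge0 // ler_wpM2l //; lra.
Qed.

End BregmanXlogx.

Section Simplex.
Context {R : realType} {n : nat} {p : 'I_n -> R}.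
Hypothesis p_simplex : in_simplex p.
Let N : R := n%:R.

Lemma le_supnorm i : `|p i| <= supnorm p.
Proof. exact: (le_bigmax 0 (fun i => `|p i|) i). Qed.

Lemma simplex_dim_gt0 : (0 < n)%N.
Proof.
case: n p p_simplex => // q [_]; rewrite big_ord0 => /eqP.
by rewrite eq_sym oner_eq0.
Qed.

Let N_gt0 : 0 < N. Proof. by rewrite ltr0n simplex_dim_gt0. Qed.

Lemma sum_bregman_xlogx_scaled :
  \sum_i bregman_xlogx (N * p i) = N * (\sum_i xlogx (p i) + ln N).
Proof.
have [p0 p1] := p_simplex.
rewrite /bregman_xlogx !big_split /= (eq_bigr _ (fun i _ => xlogxM _ _ N_gt0 (p0 i))).
rewrite big_split /= -!big_distrr -big_distrl /= sumrN -big_distrr p1 sumr_const card_ord.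
by rewrite /= mulr1 subrK mulrDr.
Qed.

Lemma sum_sqr_scaled_sub1 :
  \sum_i (N * p i - 1) ^+ 2 = N * (N * \sum_i p i ^+ 2 - 1).
Proof.
have [_ p1] := p_simplex.
under eq_bigr do rewrite sqrrB1 exprMn mulr2n.
rewrite !big_split /= sumrN big_split -!big_distrr /= p1 sumr_const card_ord; ring.
Qed.

Lemma simplex_sqr_gap_gt0 : p <> @uniform R n -> 0 < N * \sum_i p i ^+ 2 - 1.
Proof.
move=> p_neq_unif; rewrite -(pmulr_rgt0 _ N_gt0) -sum_sqr_scaled_sub1 lt_def.
rewrite sumr_ge0 ?andbT => [|i _]; last exact: sqr_ge0.
apply: contra_notN p_neq_unif => /eqP /(psumr_eq0P (fun j _ => sqr_ge0 _)) sqr0.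
apply: funext => i; have /eqP := sqr0 i isT.
by rewrite sqrf_eq0 subr_eq0 => /eqP Npi; rewrite /uniform -[N^-1]mulr1 -Npi mulKf ?gt_eqF.
Qed.

End Simplex.

Theorem proposition1 (R : realType) (n : nat) (p : 'I_n -> R) :
  in_simplex p ->
  let S := \sum_(i < n) xlogx (p i) + ln (n%:R) in
  let Q := n%:R * \sum_(i < n) p i ^+ 2 - 1 in
  ((Q / (2 * (n%:R * supnorm p + 1)) <= S) /\ (S <= Q)) /\
  (p <> @uniform R n ->
     (1 / (2 * (n%:R * supnorm p + 1)) <= S / Q) /\ (S / Q <= 1)).
Proof.
move=> p_simplex S Q; have [p_ge0 _] := p_simplex.
have N_gt0 : 0 < n%:R :> R by rewrite ltr0n (simplex_dim_gt0 p_simplex).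
have /andP[lower upper] : Q / (2 * (n%:R * supnorm p + 1)) <= S <= Q.
  have := @sum_bregman_xlogx_bounds _ _ (fun i => n%:R * p i) (n%:R * supnorm p).
  rewrite sum_bregman_xlogx_scaled // sum_sqr_scaled_sub1 // -mulrA !ler_pM2l //; apply.
  move=> i; rewrite mulr_ge0 ?(ltW N_gt0) //= ler_pM2l //.
  exact: le_trans (ler_norm _) (le_supnorm i).
split=> // p_neq_unif; have Q_gt0 := simplex_sqr_gap_gt0 p_simplex p_neq_unif.
by rewrite ler_pdivlMr // ler_pdivrMr // !mul1r mulrC.
Qed.
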